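(* Let $n\ge 1$, $m\ge 1$, and suppose: each $u_x$ ($x=1,\dots,m$) is concave and differentiable; $c$ is convex and differentiable; and at least one of the following holds: (a) all but at most one of the $u_x$ are strictly concave, or (b) $c$ is strictly convex. Then the potential function $$\Phi(\mathbf{s})=\sum_{x=1}^m\left[\left(1-\frac1n\right)\int_0^{s_x}\frac{u_x(t)}{t}\,\mathrm{d}t+\frac1n u_x(s_x)\right]-n\,c(\mathbf{s}/n)$$ is strictly concave on $n\Delta^{m-1}=\{\mathbf{s}\in\mathbb{R}^m:\mathbf{s}\ge0,\ \sum_x s_x=n\}$.
   Context: Here $\Delta^{m-1}=\{\mathbf{v}\in\mathbb{R}^m:\mathbf{v}\ge 0,\ \mathbf{v}^{T}\mathbf{1}=1\}$; for each $x\in\{1,\dots,m\}$, $u_x:\mathbb{R}_{\ge 0}\to\mathbb{R}_{\ge 0}$ satisfies $u_x(0)=0$; and $c:\Delta^{m-1}\to\mathbb{R}_{\ge 0}$. *)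

From HB Require Import structures.
From mathcomp Require Import all_boot all_order all_algebra.
From mathcomp Require Import all_classical all_reals all_analysis.
Set Implicit Arguments. Unset Strict Implicit. Unset Printing Implicit Defensive.
Import Order.TTheory GRing.Theory Num.Theory.
Import numFieldNormedType.Exports.
Local Open Scope classical_set_scope.
Local Open Scope ring_scope.

Section Defs.
Variable R : realType.

Definition concave_on_nonneg (f : R -> R) : Prop :=
  forall a b t : R, 0 <= a -> 0 <= b -> 0 <= t <= 1 ->
    t * f a + (1 - t) * f b <= f (t * a + (1 - t) * b).

Definition strictly_concave_on_nonneg (f : R -> R) : Prop :=
  forall a b t : R, 0 <= a -> 0 <= b -> a != b -> 0 < t < 1 ->
    t * f a + (1 - t) * f b < f (t * a + (1 - t) * b).

Definition differentiable_on_nonneg (f : R -> R) : Prop :=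
  (forall t : R, 0 < t -> derivable f t 1) /\
  cvg ((fun h : R => h^-1 * (f h - f 0)) @ 0^'+).

Definition scaled_simplex (m : nat) (k : R) : set 'rV[R]_m :=
  [set v | (forall i, 0 <= v ord0 i) /\ \sum_i v ord0 i = k].

Definition simplex (m : nat) : set 'rV[R]_m := @scaled_simplex m 1.

Definition convex_on (m : nat) (D : set 'rV[R]_m) (c : 'rV[R]_m -> R) : Prop :=
  forall a b (t : R), D a -> D b -> 0 <= t <= 1 ->
    c (t *: a + (1 - t) *: b) <= t * c a + (1 - t) * c b.

Definition strictly_convex_on (m : nat) (D : set 'rV[R]_m) (c : 'rV[R]_m -> R) : Prop :=
  forall a b (t : R), D a -> D b -> a != b -> 0 < t < 1 ->
    c (t *: a + (1 - t) *: b) < t * c a + (1 - t) * c b.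

Definition strictly_concave_on (m : nat) (D : set 'rV[R]_m) (F : 'rV[R]_m -> R) : Prop :=
  forall a b (t : R), D a -> D b -> a != b -> 0 < t < 1 ->
    t * F a + (1 - t) * F b < F (t *: a + (1 - t) *: b).

Definition potential (m n : nat) (u : 'I_m -> R -> R) (c : 'rV[R]_m -> R)
    (s : 'rV[R]_m) : R :=
  \sum_(x < m)
     ((1 - n%:R^-1) * Rintegral (@lebesgue_measure R) `[0, s ord0 x]
                        (fun t => u x t / t)
      + n%:R^-1 * u x (s ord0 x))
  - n%:R * c (n%:R^-1 *: s).

End Defs.

From HB Require Import structures.
From mathcomp Require Import all_boot all_order all_algebra.
From mathcomp Require Import all_classical all_reals all_analysis.
From mathcomp Require Import measurable_realfun ring lra.
Set Implicit Arguments.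
Unset Strict Implicit.
Unset Printing Implicit Defensive.
Import Order.TTheory GRing.Theory Num.Theory.
Import numFieldNormedType.Exports.
Local Open Scope classical_set_scope.
Local Open Scope ring_scope.

(* Concavity of
   u_x with u_x(0) = 0 makes the slope u_x(t)/t nonincreasing on (0, +oo), so
   its primitive G_x is concave; the finite right derivative at 0 bounds the
   slope, which makes it integrable.  The perspective term -n c(s/n) of a
   convex c is concave.  Strictness comes from c in case (b).  In case (a),
   two distinct points of n Delta have the same coordinate sum, so they differ
   in at least two coordinates, one of which carries a strictly concave u_x. *)

Section interval_integrals.
Context {R : realType}.
Local Notation mu := (@lebesgue_measure R).

Lemma bounded_integrable_itv (f : R -> R) (a b M : R) :
  measurable_fun `[a, b] f -> (forall t, a <= t <= b -> `|f t| <= M) ->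
  mu.-integrable `[a, b] (EFin \o f).
Proof.
move=> mf f_le; have ab_finite : (mu `[a, b] < +oo)%E.
  rewrite lebesgue_measure_itv /=; case: ifP => _; last exact: ltry.
  by rewrite -EFinD ltry.
apply: measurable_bounded_integrable ab_finite mf _ => //.
rewrite /bounded_near; near=> N => t /= abt; apply: (le_trans (f_le t _)).
  by move: abt; rewrite /= in_itv.
by near: N; apply: nbhs_pinfty_ge; exact: num_real.
Unshelve. all: by end_near.
Qed.

Lemma lebesgue_measure_itv_oc (a b : R) : a <= b -> fine (mu `]a, b]) = b - a.
Proof.
move=> ab; rewrite lebesgue_measure_itv /= lte_fin; case: ltP => //= ba.
have -> : b = a by apply/eqP; rewrite eq_le ab ba.
by rewrite subrr.
Qed.

Lemma integrable_itv_oc_cst (a b k : R) :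
  mu.-integrable `]a, b] (EFin \o cst k).
Proof.
have := @bounded_integrable_itv (cst k) a b `|k| (measurable_cst k) (fun t _ => lexx _).
by apply: integrableS => //; apply: subset_itvr; rewrite bnd_simp.
Qed.

Lemma Rintegral_itv_oc_ge (g : R -> R) (a b k : R) : a <= b ->
  mu.-integrable `]a, b] (EFin \o g) -> (forall x, a < x <= b -> k <= g x) ->
  (b - a) * k <= Rintegral mu `]a, b] g.
Proof.
move=> ab g_int k_le.
rewrite -(lebesgue_measure_itv_oc ab) mulrC -Rintegral_cst //.
by apply: le_Rintegral => //; exact: integrable_itv_oc_cst.
Qed.

Lemma Rintegral_itv_oc_le (g : R -> R) (a b k : R) : a <= b ->
  mu.-integrable `]a, b] (EFin \o g) -> (forall x, a < x <= b -> g x <= k) ->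
  Rintegral mu `]a, b] g <= (b - a) * k.
Proof.
move=> ab g_int le_k.
rewrite -(lebesgue_measure_itv_oc ab) mulrC -Rintegral_cst //.
by apply: le_Rintegral => //; exact: integrable_itv_oc_cst.
Qed.

End interval_integrals.

Section concavity_on_nonneg.
Context {R : realType}.

Lemma concave_on_nonneg_lt (f : R -> R) :
  (forall a b t, 0 <= a -> a < b -> 0 < t < 1 ->
     t * f a + (1 - t) * f b <= f (t * a + (1 - t) * b)) ->
  concave_on_nonneg f.
Proof.
move=> f_lt a b t a0 b0 /andP[t0 t1].
have [->|t_neq0] := eqVneq t 0; first by rewrite !mul0r !add0r subr0 !mul1r.
have [->|t_neq1] := eqVneq t 1; first by rewrite subrr !mul0r !addr0 !mul1r.
have t01 : 0 < t < 1 by rewrite !lt_neqAle eq_sym t_neq0 t_neq1 t0 t1.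
have [ab|ba|<-] := ltgtP a b; first exact: f_lt.
- have t01' : 0 < 1 - t < 1 by case/andP: t01 => ? ?; apply/andP; split; lra.
  have := f_lt b a (1 - t) b0 ba t01'; rewrite subKr.
  by rewrite addrC [X in _ <= f X]addrC.
- have -> : t * a + (1 - t) * a = a by ring.
  by have -> : t * f a + (1 - t) * f a = f a by ring.
Qed.

Lemma concave_on_nonneg_by_slopes (f : R -> R) :
  (forall a p b, 0 <= a -> a < p -> p < b ->
     exists k, (p - a) * k <= f p - f a /\ f b - f p <= (b - p) * k) ->
  concave_on_nonneg f.
Proof.
move=> slopes; apply: concave_on_nonneg_lt => a b t a0 ab /andP[t0 t1].
set p := t * a + (1 - t) * b.
have ap : a < p by rewrite /p; nra.
have pb : p < b by rewrite /p; nra.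
have [k [lb ub]] := slopes a p b a0 ap pb.
have := ler_wpM2l (ltW t0) lb.
have t1_gt0 : 0 < 1 - t by rewrite subr_gt0.
have := ler_wpM2l (ltW t1_gt0) ub.
rewrite /p; nra.
Qed.

Lemma concave_on_nonneg_comb (r1 r2 : R) (f g : R -> R) : 0 <= r1 -> 0 <= r2 ->
  concave_on_nonneg f -> concave_on_nonneg g ->
  concave_on_nonneg (fun s => r1 * f s + r2 * g s).
Proof.
move=> r1_ge0 r2_ge0 f_concave g_concave a b t a0 b0 t01.
have := ler_wpM2l r1_ge0 (f_concave a b t a0 b0 t01).
have := ler_wpM2l r2_ge0 (g_concave a b t a0 b0 t01).
lra.
Qed.

Lemma strictly_concave_on_nonneg_comb (r1 r2 : R) (f g : R -> R) :
  0 <= r1 -> 0 < r2 ->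
  concave_on_nonneg f -> strictly_concave_on_nonneg g ->
  strictly_concave_on_nonneg (fun s => r1 * f s + r2 * g s).
Proof.
move=> r1_ge0 r2_gt0 f_concave g_strict a b t a0 b0 ab t01.
have t01' : 0 <= t <= 1 by case/andP: t01 => t0 t1; rewrite !ltW.
have := ler_wpM2l r1_ge0 (f_concave a b t a0 b0 t01').
have := g_strict a b t a0 b0 ab t01; rewrite -(ltr_pM2l r2_gt0).
lra.
Qed.

End concavity_on_nonneg.

Section nonincreasing_on_pos.
Context {R : realType}.
Local Notation mu := (@lebesgue_measure R).
Variable g : R -> R.
Hypothesis g_noninc : forall x y, 0 < x -> x <= y -> g y <= g x.

Lemma measurable_fun_itv0_nonincreasing (L s : R) :
  (forall t, 0 < t -> g t <= L) -> measurable_fun `[0, s] g.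
Proof.
move=> g_le; pose h t := if 0 < t then g t else L.
have h_noninc : nonincreasing_fun h.
  move=> x y xy; rewrite /h.
  case: (ltP 0 x) => x0; case: (ltP 0 y) => y0 //.
  - exact: g_noninc.
  - by move: (lt_le_trans x0 xy); rewrite ltNge y0.
  - exact: g_le.
apply/measurable_fun_itv_obnd_cbndP.
apply: (eq_measurable_fun h); last exact: nonincreasing_measurable.
by move=> t; rewrite inE /= in_itv /= /h => /andP[->].
Qed.

Lemma concave_on_nonneg_primitive :
  (forall s, 0 <= s -> mu.-integrable `[0, s] (EFin \o g)) ->
  concave_on_nonneg (fun s => Rintegral mu `[0, s] g).
Proof.
move=> g_int; apply: concave_on_nonneg_by_slopes => a p b a0 ap pb.
have p0 : 0 < p := le_lt_trans a0 ap.
have b0 : 0 <= b := ltW (lt_trans p0 pb).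
have primitiveB x y : 0 <= x -> x <= y ->
    Rintegral mu `[0, y] g - Rintegral mu `[0, x] g = Rintegral mu `]x, y] g.
  move=> x0 xy; apply: Rintegral_itvB; rewrite ?bnd_simp //.
  exact: g_int (le_trans x0 xy).
have int_oc x y : 0 <= x -> x <= y -> mu.-integrable `]x, y] (EFin \o g).
  move=> x0 xy; apply: integrableS (g_int _ (le_trans x0 xy)) => //.
  by apply: subset_itvr; rewrite bnd_simp.
exists (g p); rewrite !primitiveB ?(ltW ap) ?(ltW pb) ?(ltW p0) //; split.
- apply: Rintegral_itv_oc_ge (ltW ap) (int_oc _ _ a0 (ltW ap)) _ => x /andP[ax xp].
  exact: g_noninc (le_lt_trans a0 ax) xp.
- apply: Rintegral_itv_oc_le (ltW pb) (int_oc _ _ (ltW p0) (ltW pb)) _ => x /andP[px xb].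
  exact: g_noninc p0 (ltW px).
Qed.

End nonincreasing_on_pos.

Section slope_at_origin.
Context {R : realType}.
Local Notation mu := (@lebesgue_measure R).
Variable u : R -> R.
Hypotheses (u_concave : concave_on_nonneg u) (u0 : u 0 = 0).

Lemma concave_slope_nonincreasing x y : 0 < x -> x <= y -> u y / y <= u x / x.
Proof.
move=> x0 xy; have y0 := lt_le_trans x0 xy.
have xy01 : 0 <= x / y <= 1.
  by rewrite divr_ge0 ?(ltW x0) ?(ltW y0) //= ler_pdivrMr // mul1r.
have := u_concave (ltW y0) (lexx 0) xy01.
rewrite u0 !mulr0 !addr0 divfK ?gt_eqF // => le_ux.
by rewrite ler_pdivlMr // [leLHS](_ : _ = x / y * u y) //; ring.
Qed.

Hypothesis u_diff : differentiable_on_nonneg u.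

Lemma concave_slope_bounded : exists L, forall t, 0 < t -> u t / t <= L.
Proof.
case: u_diff => _ slope_cvg.
exists (lim ((fun h : R => h^-1 * (u h - u 0)) @ 0^'+)) => t t0.
rewrite leNgt; apply/negP => lim_lt.
have : \forall h \near 0^'+, h^-1 * (u h - u 0) < u t / t /\ 0 < h < t.
  near=> h; split; last (apply/andP; split).
  - near: h; exact: (cvgr_lt _ slope_cvg _ lim_lt).
  - near: h; exact: nbhs_right_gt.
  - near: h; exact: nbhs_right_lt.
move=> /filter_ex [h [+ /andP[h0 ht]]].
by rewrite u0 subr0 mulrC ltNge concave_slope_nonincreasing // ltW.
Unshelve. all: by end_near.
Qed.

Hypothesis u_ge0 : forall t, 0 <= t -> 0 <= u t.

Lemma concave_slope_integrable s :
  mu.-integrable `[0, s] (EFin \o (fun t => u t / t)).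
Proof.
have [L slope_le] := concave_slope_bounded.
apply: (@bounded_integrable_itv _ _ _ _ `|L|).
  exact: (measurable_fun_itv0_nonincreasing (g := fun t => u t / t)
    concave_slope_nonincreasing slope_le).
move=> t /andP[t0 _]; rewrite ger0_norm ?divr_ge0 ?u_ge0 //.
have [->|t_neq0] := eqVneq t 0; first by rewrite invr0 mulr0.
by apply: le_trans (slope_le _ _) (ler_norm L); rewrite lt_neqAle eq_sym t_neq0.
Qed.

Lemma concave_on_nonneg_slope_primitive :
  concave_on_nonneg (fun s => Rintegral mu `[0, s] (fun t => u t / t)).
Proof.
apply: (concave_on_nonneg_primitive (g := fun t => u t / t))
  concave_slope_nonincreasing _.
by move=> s _; exact: concave_slope_integrable.
Qed.

End slope_at_origin.

Definition potential_term {R : realType} (n : nat) (u : R -> R) (s : R) : R :=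
  (1 - n%:R^-1) * Rintegral (@lebesgue_measure R) `[0, s] (fun t => u t / t)
  + n%:R^-1 * u s.

Section potential_term_concave.
Context {R : realType}.
Variables (n : nat) (u : R -> R).
Hypotheses (u_concave : concave_on_nonneg u) (u0 : u 0 = 0).
Hypotheses (u_diff : differentiable_on_nonneg u) (u_ge0 : forall t, 0 <= t -> 0 <= u t).

Let invn_le1 : n%:R^-1 <= 1 :> R.
Proof. by case: n => [|k]; rewrite ?invr0 ?ler01 // invf_le1 ?ltr0n // ler1n. Qed.

Lemma concave_on_nonneg_potential_term : concave_on_nonneg (potential_term n u).
Proof.
apply: concave_on_nonneg_comb => //.
- by rewrite subr_ge0 invn_le1.
- exact: concave_on_nonneg_slope_primitive.
Qed.

Lemma strictly_concave_on_nonneg_potential_term :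
  (0 < n)%N -> strictly_concave_on_nonneg u ->
  strictly_concave_on_nonneg (potential_term n u).
Proof.
move=> n_gt0 u_strict; apply: strictly_concave_on_nonneg_comb => //.
- by rewrite subr_ge0 invn_le1.
- by rewrite invr_gt0 ltr0n.
- exact: concave_on_nonneg_slope_primitive.
Qed.

End potential_term_concave.

Section concavity_on_rows.
Context {R : realType} {m : nat}.
Implicit Types (D : set 'rV[R]_m) (F G : 'rV[R]_m -> R) (a b v : 'rV[R]_m).

Definition concave_on D F : Prop :=
  forall a b (t : R), D a -> D b -> 0 <= t <= 1 ->
    t * F a + (1 - t) * F b <= F (t *: a + (1 - t) *: b).

Lemma strictly_concave_onD D F G : concave_on D F -> concave_on D G ->
  strictly_concave_on D F \/ strictly_concave_on D G ->
  strictly_concave_on D (fun s => F s + G s).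
Proof.
move=> F_concave G_concave F_G_strict a b t Da Db ab t01.
have t01' : 0 <= t <= 1 by case/andP: t01 => t0 t1; rewrite !ltW.
have := F_concave a b t Da Db t01'; have := G_concave a b t Da Db t01'.
case: F_G_strict => [F_strict|G_strict].
- by have := F_strict a b t Da Db ab t01; lra.
- by have := G_strict a b t Da Db ab t01; lra.
Qed.

Lemma eq_row_sum_neq_coord a b (x0 : 'I_m) :
  \sum_i a ord0 i = \sum_i b ord0 i -> a != b ->
  exists2 x, x != x0 & a ord0 x != b ord0 x.
Proof.
move=> sum_ab; apply: contraNP => no_coord; apply/eqP.
have same y : y != x0 -> a ord0 y = b ord0 y.
  by move=> yx0; apply/eqP/negPn/negP => aby; apply: no_coord; exists y.
apply/rowP => x; have [->|/same //] := eqVneq x x0.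
move: sum_ab; rewrite (bigD1 x0) //= [X in _ = X](bigD1 x0) //=.
by rewrite (eq_bigr (fun y => b ord0 y)) => [/addIr|y /same].
Qed.

Lemma concave_on_sum_coord (F : 'I_m -> R -> R) (k : R) :
  (forall x, concave_on_nonneg (F x)) ->
  concave_on (scaled_simplex k) (fun s => \sum_x F x (s ord0 x)).
Proof.
move=> F_concave a b t [a_ge0 _] [b_ge0 _] t01.
rewrite !mulr_sumr -big_split /=; apply: ler_sum => x _.
by rewrite !mxE; apply: F_concave.
Qed.

Lemma strictly_concave_on_sum_coord (F : 'I_m -> R -> R) (k : R) (x0 : 'I_m) :
  (forall x, concave_on_nonneg (F x)) ->
  (forall x, x != x0 -> strictly_concave_on_nonneg (F x)) ->
  strictly_concave_on (scaled_simplex k) (fun s => \sum_x F x (s ord0 x)).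
Proof.
move=> F_concave F_strict a b t [a_ge0 sum_a] [b_ge0 sum_b] ab t01.
have [x1 x1_neq_x0 ab_x1] := eq_row_sum_neq_coord x0 (etrans sum_a (esym sum_b)) ab.
have t01' : 0 <= t <= 1 by case/andP: t01 => t0 t1; rewrite !ltW.
rewrite !mulr_sumr -big_split /= (bigD1 x1) //= [X in _ < X](bigD1 x1) //=.
rewrite !mxE; apply: ltr_leD; first exact: F_strict.
by apply: ler_sum => x _; rewrite !mxE; apply: F_concave.
Qed.

Lemma scaled_simplexZ (k r : R) v : 0 <= r ->
  scaled_simplex k v -> scaled_simplex (r * k) (r *: v).
Proof.
move=> r_ge0 [v_ge0 sum_v]; split=> [i|]; first by rewrite mxE mulr_ge0.
by under eq_bigr do rewrite mxE; rewrite -mulr_sumr sum_v.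
Qed.

Section perspective.
Variables (k : R) (c : 'rV[R]_m -> R).
Hypothesis k_gt0 : 0 < k.

Let unit_scale v : scaled_simplex k v -> simplex (k^-1 *: v).
Proof.
have kV_ge0 : 0 <= k^-1 by rewrite invr_ge0 ltW.
by move=> /(scaled_simplexZ kV_ge0); rewrite mulVf // gt_eqF.
Qed.

Let scale_comb a b (t : R) :
  k^-1 *: (t *: a + (1 - t) *: b) = t *: (k^-1 *: a) + (1 - t) *: (k^-1 *: b).
Proof. by rewrite scalerDr !scalerA (mulrC k^-1 t) (mulrC k^-1 (1 - t)). Qed.

Lemma concave_on_perspective : convex_on (@simplex R m) c ->
  concave_on (scaled_simplex k) (fun s => - (k * c (k^-1 *: s))).
Proof.
move=> c_convex a b t a_k b_k t01; rewrite scale_comb.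
have := c_convex _ _ t (unit_scale a_k) (unit_scale b_k) t01.
rewrite -(ler_pM2l k_gt0); lra.
Qed.

Lemma strictly_concave_on_perspective : strictly_convex_on (@simplex R m) c ->
  strictly_concave_on (scaled_simplex k) (fun s => - (k * c (k^-1 *: s))).
Proof.
move=> c_strict a b t a_k b_k ab t01; rewrite scale_comb.
have kV_neq0 : k^-1 != 0 by rewrite invr_neq0 // gt_eqF.
have abV : k^-1 *: a != k^-1 *: b by rewrite (inj_eq (scalerI kV_neq0)).
have := c_strict _ _ t (unit_scale a_k) (unit_scale b_k) abV t01.
rewrite -(ltr_pM2l k_gt0); lra.
Qed.

End perspective.

End concavity_on_rows.

Theorem proposition4 (R : realType) (n m : nat)
  (u : 'I_m -> R -> R) (c : 'rV[R]_m -> R) :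
  (0 < n)%N -> (0 < m)%N ->
  (forall x t, 0 <= t -> 0 <= u x t) ->
  (forall x, u x 0 = 0) ->
  (forall v, simplex v -> 0 <= c v) ->
  (forall x, concave_on_nonneg (u x)) ->
  (forall x, differentiable_on_nonneg (u x)) ->
  convex_on (@simplex R m) c ->
  (forall v, simplex v -> differentiable c v) ->
  ((exists x0 : 'I_m, forall x, x != x0 -> strictly_concave_on_nonneg (u x))
   \/ strictly_convex_on (@simplex R m) c) ->
  strictly_concave_on (@scaled_simplex R m n%:R) (@potential R m n u c).
Proof.
move=> n_gt0 _ u_ge0 u0 _ u_concave u_diff c_convex _ strictness.
have n_pos : 0 < n%:R :> R by rewrite ltr0n.
have term_concave x : concave_on_nonneg (potential_term n (u x)).
  exact: concave_on_nonneg_potential_term (u_concave x) (u0 x) (u_diff x) (u_ge0 x).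
apply: strictly_concave_onD.
- exact: concave_on_sum_coord term_concave.
- exact: concave_on_perspective n_pos c_convex.
- case: strictness => [[x0 u_strict]|c_strict]; [left|right].
  + apply: (strictly_concave_on_sum_coord (x0 := x0) term_concave) => x x_neq_x0.
    exact: strictly_concave_on_nonneg_potential_term
      (u_concave x) (u0 x) (u_diff x) (u_ge0 x) n_gt0 (u_strict x x_neq_x0).
  + exact: strictly_concave_on_perspective n_pos c_strict.
Qed.
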